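(* Let $n>1$. For every index $i=0,\dots,n$ and all $\mathbf x,\mathbf y\in I_{n-1}$ we have $$\bigl\|(\Phi\circ\Delta_i)(\mathbf x)-(\Phi\circ\Delta_i)(\mathbf y)\bigr\|\le c_6\,6^n\,\|\mathbf x-\mathbf y\|,$$ where $c_6=\sqrt3/8$ and $\|\cdot\|$ is the sup-norm.
   Context: $I_m=\{(x_1,\dots,x_m)\in\mathbb{R}^m:-2\le x_1\le\cdots\le x_m\le2\}$. Maps $\Delta_i:I_{n-1}\to I_n$ ($0\le i\le n$): $\Delta_0(x_1,\dots,x_{n-1})=(-2,x_1,\dots,x_{n-1})$; for $0<i<n$, $\Delta_i(x_1,\dots,x_{n-1})=(x_1,\dots,x_{i-1},x_i,x_i,x_{i+1},\dots,x_{n-1})$; $\Delta_n(x_1,\dots,x_{n-1})=(x_1,\dots,x_{n-1},2)$. For $\mathbf c\in\mathbb{R}^n$ let $h_{\mathbf c}=x^n+c_1x^{n-1}+\cdots+c_n$, and for $\mathbf b\in\mathbb{R}^n$ let $g_{\mathbf b}=(x^{2n}+1)+b_1(x^{2n-1}+x)+\cdots+b_{n-1}(x^{n+1}+x^{n-1})+b_nx^n$. $\Psi(\mathbf r)=\mathbf c$ where $(x-r_1)\cdots(x-r_n)=h_{\mathbf c}$; $\mathrm X(\mathbf c)=\mathbf b$ where $x^nh_{\mathbf c}(x+1/x)=g_{\mathbf b}$; $\Phi=\mathrm X\circ\Psi$. *)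

From HB Require Import structures.
From mathcomp Require Import all_boot all_order all_algebra.
From mathcomp Require Import reals.
Set Implicit Arguments. Unset Strict Implicit. Unset Printing Implicit Defensive.
Import Order.TTheory GRing.Theory Num.Theory.
Local Open Scope ring_scope.

(* Vectors in R^m are functions 'I_m -> R; the 0-based ordinal j stands for
   the paper's 1-based coordinate j+1. *)

Section Defs.
Variable R : realType.

(* 1-based coordinate access: coord x k = x_k for 1 <= k <= m, 0 otherwise. *)
Definition coord (m : nat) (x : 'I_m -> R) (k : nat) : R :=
  if insub k.-1 is Some j then (if k == 0%N then 0 else x j) else 0.

Definition in_I (m : nat) (x : 'I_m -> R) : Prop :=
  (forall j : 'I_m, -2 <= x j /\ x j <= 2) /\
  (forall j k : 'I_m, (j <= k)%N -> x j <= x k).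

Definition ext (n : nat) (x : 'I_n.-1 -> R) (k : nat) : R :=
  if k == 0%N then -2 else if (n <= k)%N then 2 else coord x k.

(* Coordinate k (1-based) of Delta_i x is
   x_k if k <= i and x_(k-1) otherwise, with the convention x_0 = -2, x_n = 2.
   This gives exactly: Delta_0 x = (-2, x_1..x_(n-1)),
   Delta_i x = (x_1..x_i, x_i, x_(i+1)..x_(n-1)) for 0<i<n,
   Delta_n x = (x_1..x_(n-1), 2). *)
Definition Delta (n i : nat) (x : 'I_n.-1 -> R) : 'I_n -> R :=
  fun j => let k := j.+1 in if (k <= i)%N then ext x k else ext x k.-1.

(* Psi(r) = c where (x - r_1)...(x - r_n) = x^n + c_1 x^(n-1) + ... + c_n. *)
Definition Psi (n : nat) (r : 'I_n -> R) : 'I_n -> R :=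
  fun j => (\prod_(l < n) ('X - (r l)%:P))`_(n - j.+1).

Definition cext (n : nat) (c : 'I_n -> R) (k : nat) : R :=
  if k == 0%N then 1 else coord c k.

(* x^n h_c(x + 1/x) = sum_(k=0..n) c_k x^n (x+1/x)^(n-k)
                    = sum_(k=0..n) c_k x^k (x^2+1)^(n-k), c_0 = 1. *)
Definition Xpoly (n : nat) (c : 'I_n -> R) : {poly R} :=
  \sum_(k < n.+1) cext c k *: ('X^k * ('X^2 + 1) ^+ (n - k)).

(* X(c) = b where x^n h_c(x+1/x) = g_b, i.e. b_k is the coefficient of
   x^(2n-k) in x^n h_c(x+1/x), k = 1..n. *)
Definition Xmap (n : nat) (c : 'I_n -> R) : 'I_n -> R :=
  fun j => (Xpoly c)`_(2 * n - j.+1).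

Definition Phi (n : nat) (r : 'I_n -> R) : 'I_n -> R := Xmap (Psi r).

Definition supnorm (m : nat) (v : 'I_m -> R) : R :=
  \big[Num.max/0]_(j < m) `|v j|.

Definition c6 : R := Num.sqrt 3 / 8.

End Defs.

From Pilot Require Import Defs.
From HB Require Import structures.
From mathcomp Require Import all_boot all_order all_algebra.
From mathcomp Require Import reals.
From mathcomp Require Import ring lra zify.
Set Implicit Arguments. Unset Strict Implicit. Unset Printing Implicit Defensive.
Import Order.TTheory GRing.Theory Num.Theory.
Local Open Scope ring_scope.

(* The substitution p(x) |-> x^n p(x + 1/x) is multiplicative, so
   Phi r = x^n prod_l (x + 1/x - r_l) has the coefficients of the product of
   the quadratics x^2 + 1 - r_l x.  For |r_l| <= 2 each such factor at most
   quadruples the largest coefficient, and changing one r_l by d changes the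
   product by d x times a product of the other factors.  Peeling the factors
   off one at a time bounds the coefficients of the difference of two such
   products of n factors by D_n d, where D_(k+1) = 4 D_k + C_k and
   C_k = 2 4^(k-1) (C_0 = 1) bounds the coefficients of a product of k
   factors; then D_n <= (3/16) 6^n <= c6 6^n since sqrt 3 >= 3/2. *)

Definition prod_bound (k : nat) : nat := if k is k'.+1 then 2 * 4 ^ k' else 1.

Fixpoint prod_diff_bound (k : nat) : nat :=
  if k is k'.+1 then 4 * prod_diff_bound k' + prod_bound k' else 0.

Lemma prod_diff_bound_le n : (16 * prod_diff_bound n.+2 <= 3 * 6 ^ n.+2)%N.
Proof.
elim: n => [|n IH] //.
have pow46 : (4 ^ n.+1 <= 6 ^ n.+1)%N by rewrite leq_exp2r.
have e3 := expnS 6 n.+2; have e2 := expnS 6 n.+1.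
change (prod_diff_bound n.+3) with (4 * prod_diff_bound n.+2 + 2 * 4 ^ n.+1)%N.
lia.
Qed.

Lemma prod_diff_bound_le_c6 (R : realType) n : (1 < n)%N ->
  (prod_diff_bound n)%:R <= c6 R * 6 ^+ n.
Proof.
case: n => [|[|n]] // _.
have le_nat : (16 * prod_diff_bound n.+2)%:R <= (3 * 6 ^ n.+2)%:R :> R.
  by rewrite ler_nat prod_diff_bound_le.
rewrite natrM natrM natrX in le_nat.
have s0 : 0 <= Num.sqrt (3 : R) by apply: sqrtr_ge0.
have s3 : Num.sqrt (3 : R) ^+ 2 = 3 by rewrite sqr_sqrtr.
have p0 : 0 <= (6 : R) ^+ n.+2 by rewrite exprn_ge0.
rewrite /c6; set s := Num.sqrt _ in s0 s3 *; set P := (6 : R) ^+ n.+2 in p0 le_nat *.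
have : 3 / 2 <= s by nra.
move: le_nat; set D := (prod_diff_bound n.+2)%:R; nra.
Qed.

Section Joukowski.
Variable R : realType.

Definition joukowski (m : nat) (p : {poly R}) : {poly R} :=
  \sum_(j < m.+1) p`_j *: ('X^(m - j) * ('X^2 + 1) ^+ j).

Definition jfactor (r : R) : {poly R} := 'X^2 + 1 - r *: 'X.

Lemma joukowskiM_XsubC m (p : {poly R}) r : (size p <= m.+1)%N ->
  joukowski m.+1 (p * ('X - r%:P)) = jfactor r * joukowski m p.
Proof.
move=> size_p.
have -> : p * ('X - r%:P) = p * 'X - r *: p.
  by rewrite mulrBr (mulrC p r%:P) mul_polyC.
rewrite /joukowski.
under eq_bigr do rewrite coefB coefZ scalerBl -scalerA.
rewrite sumrB -scaler_sumr big_ord_recl coefMX /= scale0r add0r.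
rewrite [X in _ - r *: X]big_ord_recr /= (nth_default 0 size_p) scale0r addr0.
set J := \sum_(j < m.+1) p`_j *: ('X^(m - j) * ('X^2 + 1) ^+ j).
have shift_X : \sum_(i < m.+1) (p * 'X)`_(bump 0 i) *:
    ('X^(m.+1 - bump 0 i) * ('X^2 + 1) ^+ bump 0 i) = ('X^2 + 1) * J.
  rewrite /J mulr_sumr; apply: eq_bigr => j _.
  rewrite /bump /= add1n coefMX /= subSS exprS -scalerAr.
  by congr (_ *: _); rewrite mulrCA.
have widen : \sum_(i < m.+1) p`_(widen_ord (leqnSn m.+1) i) *:
    ('X^(m.+1 - widen_ord (leqnSn m.+1) i) *
     ('X^2 + 1) ^+ widen_ord (leqnSn m.+1) i) = 'X * J.
  rewrite /J mulr_sumr; apply: eq_bigr => j _ /=.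
  rewrite subSn; last by rewrite -ltnS.
  by rewrite exprS -scalerAr mulrA.
by rewrite shift_X widen /jfactor mulrBl scalerAl.
Qed.

Lemma joukowski_prod_XsubC (g : nat -> R) k :
  joukowski k (\prod_(0 <= l < k) ('X - (g l)%:P)) =
  \prod_(0 <= l < k) jfactor (g l).
Proof.
elim: k => [|k IH].
  by rewrite !big_geq // /joukowski big_ord1 coef1 scale1r !expr0 mulr1.
rewrite !big_nat_recr //= joukowskiM_XsubC; last first.
  by rewrite size_prod_XsubC size_iota subn0.
by rewrite IH mulrC.
Qed.

Lemma Xpoly_Psi n (g : nat -> R) :
  Xpoly (Psi (fun l : 'I_n => g l)) = \prod_(0 <= l < n) jfactor (g l).
Proof.
set p := \prod_(0 <= l < n) ('X - (g l)%:P).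
have cext_Psi k : (k <= n)%N -> cext (Psi (fun l : 'I_n => g l)) k = p`_(n - k).
  rewrite /cext; case: k => [|k] le_kn /=.
    have /monicP := monic_prod_XsubC (index_iota 0 n) xpredT g.
    by rewrite -/p lead_coefE /p size_prod_XsubC size_iota !subn0.
  rewrite /Defs.coord /Psi /= (@insubT _ (fun m => (m < n)%N) 'I_n k le_kn) /=.
  by rewrite /p big_mkord.
rewrite -joukowski_prod_XsubC /Xpoly /joukowski (reindex_inj rev_ord_inj) /=.
apply: eq_bigr => j _.
by rewrite subSS cext_Psi ?leq_subr // subKn // -ltnS.
Qed.

Definition coef_bounded (p : {poly R}) (a : R) := forall k, `|p`_k| <= a.

Lemma coef_bounded_ge0 p a : coef_bounded p a -> 0 <= a.
Proof. by move=> bd; apply: le_trans (bd 0%N). Qed.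

Lemma coef_bounded_mul_jfactor p a r : `|r| <= 2 -> coef_bounded p a ->
  coef_bounded (p * jfactor r) (4 * a).
Proof.
move=> r_le2 bd k.
have -> : p * jfactor r = p * 'X^2 + p - r *: (p * 'X).
  by rewrite /jfactor mulrBr mulrDr mulr1 -scalerAr.
rewrite coefB coefD coefZ coefMXn coefMX.
set A := if _ then _ else _; set B := if _ then _ else _.
have A_le : `|A| <= a by rewrite /A; case: ifP => _;
  [rewrite normr0; exact: coef_bounded_ge0 bd | exact: bd].
have B_le : `|B| <= a by rewrite /B; case: ifP => _;
  [rewrite normr0; exact: coef_bounded_ge0 bd | exact: bd].
have rB_le : `|r| * `|B| <= 2 * a by apply: ler_pM.
apply: le_trans (ler_normB _ _) _; rewrite normrM.
have := ler_normD A p`_k; have := bd k; lra.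
Qed.

Lemma coef_bounded_prod_jfactor (f : nat -> R) k : (forall l, `|f l| <= 2) ->
  coef_bounded (\prod_(0 <= l < k) jfactor (f l)) (prod_bound k)%:R.
Proof.
move=> f_le2; case: k => [|k].
  by move=> j; rewrite big_geq // coef1; case: (j == 0%N); rewrite ?normr1 ?normr0.
rewrite /= natrM natrX; elim: k => [|k IH].
  rewrite big_nat1 expr0 mulr1 => j; have := f_le2 0.
  rewrite /jfactor coefB coefD coefZ coefXn coefX coef1.
  by case: j => [|[|[|j]]] /=; rewrite ?mulr0 ?mulr1 ?subr0 ?add0r ?addr0
    ?normrN ?normr1 ?normr0 //; lra.
by rewrite big_nat_recr //= exprS mulrCA; apply: coef_bounded_mul_jfactor.
Qed.

Lemma coef_bounded_prod_jfactorB (f g : nat -> R) d k :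
  (forall l, `|f l| <= 2) -> (forall l, `|g l| <= 2) ->
  (forall l, `|f l - g l| <= d) ->
  coef_bounded (\prod_(0 <= l < k) jfactor (f l) - \prod_(0 <= l < k) jfactor (g l))
    ((prod_diff_bound k)%:R * d).
Proof.
move=> f_le2 g_le2 fg_le; have d0 : 0 <= d by apply: le_trans (fg_le 0%N).
elim: k => [|k IH].
  by move=> j; rewrite !big_geq // subrr coef0 normr0 mul0r.
rewrite !big_nat_recr //=.
set Pf := \prod_(0 <= l < k) _; set Pg := \prod_(0 <= l < k) _.
have -> : Pf * jfactor (f k) - Pg * jfactor (g k)
    = (Pf - Pg) * jfactor (f k) + (g k - f k) *: (Pg * 'X).
  have -> : jfactor (f k) = jfactor (g k) + (g k - f k) *: 'X.
    by rewrite /jfactor scalerBl addrA subrK.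
  rewrite -!mul_polyC; ring.
move=> j; rewrite coefD coefZ coefMX natrD natrM [X in _ <= X]mulrDl.
rewrite -[X in _ <= X + _]mulrA.
apply: le_trans (ler_normD _ _) _; apply: lerD.
  exact: coef_bounded_mul_jfactor.
rewrite normrM mulrC distrC; apply: ler_pM => //.
by case: ifP => _; [rewrite normr0 | apply: coef_bounded_prod_jfactor].
Qed.

End Joukowski.

Section SupNorm.
Variable R : realType.

Lemma supnorm_ge0 m (v : 'I_m -> R) : 0 <= supnorm v.
Proof. by rewrite /supnorm; elim/big_ind: _ => // a b; rewrite le_max => ->. Qed.

Lemma normr_le_supnorm m (v : 'I_m -> R) j : `|v j| <= supnorm v.
Proof. exact: le_bigmax. Qed.

Lemma supnorm_le m (v : 'I_m -> R) B :
  0 <= B -> (forall j, `|v j| <= B) -> supnorm v <= B.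
Proof. by move=> B0 v_le; apply/bigmax_leP. Qed.

Lemma norm_ext_le2 n (x : 'I_n.-1 -> R) k : in_I x -> `|ext x k| <= 2.
Proof.
move=> [x_le2 _]; rewrite /ext.
case: ifP => _; first by rewrite normrN normr_nat.
case: ifP => _; first by rewrite normr_nat.
rewrite /Defs.coord; case: insub => [j|]; last by rewrite normr0 ler0n.
case: ifP => _; first by rewrite normr0 ler0n.
by have [lo hi] := x_le2 j; rewrite ler_norml lo hi.
Qed.

Lemma norm_extB_le n (x y : 'I_n.-1 -> R) k :
  `|ext x k - ext y k| <= supnorm (fun j => x j - y j).
Proof.
rewrite /ext; do 2 (case: ifP => _; first by rewrite subrr normr0 supnorm_ge0).
rewrite /Defs.coord; case: insub => [j|]; last by rewrite subrr normr0 supnorm_ge0.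
case: ifP => _; first by rewrite subrr normr0 supnorm_ge0.
exact: (normr_le_supnorm (fun j => x j - y j)).
Qed.

End SupNorm.

Definition Delta_seq (R : realType) n i (x : 'I_n.-1 -> R) (l : nat) : R :=
  if (l.+1 <= i)%N then ext x l.+1 else ext x l.

Theorem lemma2p3p3 (R : realType) (n : nat) (hn : (1 < n)%N) (i : nat)
    (hi : (i <= n)%N) (x y : 'I_n.-1 -> R) :
  in_I x -> in_I y ->
  supnorm (fun j => Phi (Delta i x) j - Phi (Delta i y) j)
    <= c6 R * (6 ^+ n) * supnorm (fun j => x j - y j).
Proof.
move=> Ix Iy; set d := supnorm (fun j => x j - y j).
have Phi_Delta (z : 'I_n.-1 -> R) (j : 'I_n) : Phi (Delta i z) j
    = (\prod_(0 <= l < n) jfactor (Delta_seq i z l))`_(2 * n - j.+1).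
  by rewrite /Phi /Xmap -Xpoly_Psi.
have Delta_le2 (z : 'I_n.-1 -> R) : in_I z -> forall l, `|Delta_seq i z l| <= 2.
  by move=> Iz l; rewrite /Delta_seq; case: ifP => _; apply: norm_ext_le2.
have DeltaB_le l : `|Delta_seq i x l - Delta_seq i y l| <= d.
  by rewrite /Delta_seq; case: ifP => _; apply: norm_extB_le.
have bound := prod_diff_bound_le_c6 R hn.
apply: supnorm_le => [|j]; first by rewrite mulr_ge0 ?supnorm_ge0 ?(le_trans _ bound).
rewrite !Phi_Delta -coefB.
apply: le_trans (coef_bounded_prod_jfactorB n (Delta_le2 x Ix) (Delta_le2 y Iy) DeltaB_le _) _.
by rewrite ler_wpM2r ?supnorm_ge0.
Qed.
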